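(* Consider the repeated service game described in the context, with $t>0$, $\tau\in(0,t)$, $c>0$, $p>c$, $d\in(0,1)$, $w\in(0,1)$, and a strictly decreasing continuous utility $\Gamma:[0,1]\to(0,\infty)$ with $\Gamma(0)>p$. If the cooperation conditions hold, then $$d\le d_s(w;\tau,p):=1-\frac{c\left(1-(1-w)\frac{\tau}{t}\right)}{wp}\qquad\text{and}\qquad d\le d_c(w;\tau,p):=\Gamma^{-1}\!\left(\frac{p}{1-(1-w)\frac{\tau}{t}}\right).$$
   Context: A service provider (SP) and a client interact in rounds of duration $t>0$. The parameters are: trial time $\tau$, SP cost per unit time $c$, price per unit time $p$, channel outage probability $d$, continuation probability (cooperation willingness) $w$, and a client utility function $\Gamma$. When both players use the cooperative strategy COOP, the long-term payoffs are $$\Pi_s^{\mathrm C}=\frac{(1-d)(p-c)t-dc\tau}{1-(1-d)w},\qquad \Pi_c^{\mathrm C}=\frac{(1-d)(\Gamma(d)-p)t+d\Gamma(d)\tau}{1-(1-d)w}.$$ For an integer $j\ge 2$, the long-term payoff of a player using the defect-and-recover-after-$j$-rounds strategy JDEF$_j$ against COOP is: - for the SP, $$\Pi_s^{(j)}=\frac{(1-d)\big(pt-c\tau-w^{j-1}c(t-\tau)\big)-dc\tau}{1-(1-d)w^{j}};$$ - for the client, $$\Pi_c^{(j)}=\frac{(1-d)\big(\Gamma(d)\tau+w^{j-1}(\Gamma(d)(t-\tau)-pt)\big)+d\Gamma(d)\tau}{1-(1-d)w^{j}}.$$ The cooperation conditions hold when both of the following hold: - $\Pi_s^{\mathrm C}\ge\Pi_s^{(j)}$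 for all integers $j\ge2$; - $\Pi_c^{\mathrm C}\ge \Pi_c^{(j)}$ for all integers $j\ge 2$. For $0<y\le \Gamma(0)$, we write $\Gamma^{-1}(y):=\sup\{x\in[0,1]:\Gamma(x)\ge y\}$. This coincides with the inverse of $\Gamma$ whenever $y$ is in the range of $\Gamma$. *)

From Stdlib Require Import Reals Lra Lia.
Open Scope R_scope.

(* Long-term payoffs when both players use COOP. *)
Definition PiC_s (t tau c p d w : R) : R :=
  ((1 - d) * (p - c) * t - d * c * tau) / (1 - (1 - d) * w).

Definition PiC_c (Gamma : R -> R) (t tau p d w : R) : R :=
  ((1 - d) * (Gamma d - p) * t + d * Gamma d * tau) / (1 - (1 - d) * w).

(* Long-term payoff of JDEF_j against COOP (j >= 2). *)
Definition PiJ_s (t tau c p d w : R) (j : nat) : R :=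
  ((1 - d) * (p * t - c * tau - w ^ (j - 1) * c * (t - tau)) - d * c * tau)
  / (1 - (1 - d) * w ^ j).

Definition PiJ_c (Gamma : R -> R) (t tau p d w : R) (j : nat) : R :=
  ((1 - d) * (Gamma d * tau + w ^ (j - 1) * (Gamma d * (t - tau) - p * t))
     + d * Gamma d * tau)
  / (1 - (1 - d) * w ^ j).

Definition cooperation_conditions (Gamma : R -> R) (t tau c p d w : R) : Prop :=
  (forall j : nat, (2 <= j)%nat -> PiC_s t tau c p d w >= PiJ_s t tau c p d w j) /\
  (forall j : nat, (2 <= j)%nat -> PiC_c Gamma t tau p d w >= PiJ_c Gamma t tau p d w j).

Definition strictly_decreasing_01 (Gamma : R -> R) : Prop :=
  forall x y, 0 <= x <= 1 -> 0 <= y <= 1 -> x < y -> Gamma y < Gamma x.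

Definition continuous_on_01 (Gamma : R -> R) : Prop :=
  forall x, 0 <= x <= 1 -> forall eps, 0 < eps ->
    exists delta, 0 < delta /\
      forall y, 0 <= y <= 1 -> Rabs (y - x) < delta -> Rabs (Gamma y - Gamma x) < eps.

Definition positive_on_01 (Gamma : R -> R) : Prop :=
  forall x, 0 <= x <= 1 -> 0 < Gamma x.

(* Gamma^{-1}(y) := sup { x in [0,1] | Gamma x >= y };
   "is_Gamma_inv Gamma y s" says s is that supremum (least upper bound). *)
Definition Gamma_level_set (Gamma : R -> R) (y : R) : R -> Prop :=
  fun x => 0 <= x <= 1 /\ Gamma x >= y.

Definition is_Gamma_inv (Gamma : R -> R) (y s : R) : Prop :=
  is_lub (Gamma_level_set Gamma y) s.

Definition d_s (t tau c p w : R) : R :=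
  1 - c * (1 - (1 - w) * (tau / t)) / (w * p).

Definition d_c_arg (t tau p w : R) : R :=
  p / (1 - (1 - w) * (tau / t)).

(* Letting the recovery delay j of JDEF_j tend to infinity, w^(j-1) -> 0 and the
   cooperation conditions yield, in the limit, that COOP is worth at least
   perpetual defection.  For the SP the latter pays (1-d)(pt - c tau) - d c tau
   per round, for the client Gamma(d) tau.  Clearing the denominator
   1 - (1-d)w, both inequalities factor as (1-d) times the thresholds:
   (1-d) w p t >= c (t - tau + w tau) and Gamma(d) (t - tau + w tau) >= p t. *)
From Stdlib Require Import Reals Lra.
From Coquelicot Require Import Rcomplements Rbar Lim_seq.
Open Scope R_scope.

Lemma nonneg_of_geometric_perturbation (a b w : R) :
  0 <= w < 1 -> (forall k : nat, 0 <= a + b * w ^ k) -> 0 <= a.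
Proof.
  intros Hw Hk.
  assert (Hpow : is_lim_seq (fun k => b * w ^ k) (b * 0)).
  { apply (is_lim_seq_scal_l (pow w) b 0), is_lim_seq_geom.
    rewrite Rabs_right; lra. }
  rewrite Rmult_0_r in Hpow.
  assert (Hlim := is_lim_seq_plus' _ _ a 0 (is_lim_seq_const a) Hpow).
  rewrite Rplus_0_r in Hlim.
  exact (is_lim_seq_le _ _ 0 a Hk (is_lim_seq_const 0) Hlim).
Qed.

Lemma ge_of_ratio_limit (L Y Z e w : R) : 0 <= e <= 1 -> 0 <= w < 1 ->
  (forall j : nat, (2 <= j)%nat -> L >= (Y + Z * w ^ (j - 1)) / (1 - e * w ^ j)) ->
  L >= Y.
Proof.
  intros He Hw H.
  apply Rle_ge, Rminus_le_0.
  (* Cross-multiplied, the condition for j = k + 2 reads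
     (L - Y) - (L e w + Z) w^(k+1) >= 0. *)
  apply (nonneg_of_geometric_perturbation _ (- (L * e * w + Z) * w) w Hw).
  intro k.
  specialize (H (S (S k)) ltac:(auto with arith)); cbn [Nat.sub pow] in H.
  assert (Hwk : 0 <= w * w ^ k < 1)
    by exact (pow_lt_1_compat w (S k) Hw (Nat.lt_0_succ k)).
  assert (Hden : 0 < 1 - e * (w * (w * w ^ k))).
  { assert (w * (w * w ^ k) <= w * w ^ k) by nra. nra. }
  apply Rge_le, (Rle_div_l _ _ _ Hden) in H.
  nra.
Qed.

Lemma coop_s_ge_perpetual_defection (t tau c p d w : R) :
  0 < d < 1 -> 0 <= w < 1 ->
  (forall j : nat, (2 <= j)%nat -> PiC_s t tau c p d w >= PiJ_s t tau c p d w j) ->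
  PiC_s t tau c p d w >= (1 - d) * (p * t - c * tau) - d * c * tau.
Proof.
  intros Hd Hw H.
  apply (ge_of_ratio_limit _ _ (- ((1 - d) * c * (t - tau))) (1 - d) w); [lra | exact Hw |].
  intros j Hj.
  replace (_ / _) with (PiJ_s t tau c p d w j) by (unfold PiJ_s; f_equal; ring).
  exact (H j Hj).
Qed.

Lemma coop_c_ge_perpetual_defection (Gamma : R -> R) (t tau p d w : R) :
  0 < d < 1 -> 0 <= w < 1 ->
  (forall j : nat, (2 <= j)%nat ->
     PiC_c Gamma t tau p d w >= PiJ_c Gamma t tau p d w j) ->
  PiC_c Gamma t tau p d w >= Gamma d * tau.
Proof.
  intros Hd Hw H.
  apply (ge_of_ratio_limit _ _ ((1 - d) * (Gamma d * (t - tau) - p * t)) (1 - d) w);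
    [lra | exact Hw |].
  intros j Hj.
  replace (_ / _) with (PiJ_c Gamma t tau p d w j) by (unfold PiJ_c; f_equal; ring).
  exact (H j Hj).
Qed.

Lemma d_le_d_s_of_payoff_bound (t tau c p d w : R) :
  0 < t -> 0 < tau < t -> 0 < p -> 0 < d < 1 -> 0 < w < 1 ->
  PiC_s t tau c p d w >= (1 - d) * (p * t - c * tau) - d * c * tau ->
  d <= d_s t tau c p w.
Proof.
  intros Ht Htau Hp Hd Hw H.
  assert (Hden : 0 < 1 - (1 - d) * w) by nra.
  apply Rge_le, (Rle_div_r _ _ _ Hden) in H.
  assert (Hkey : c * (t - tau + w * tau) <= (1 - d) * w * p * t) by nra.
  unfold d_s.
  replace (1 - (1 - w) * (tau / t)) with ((t - tau + w * tau) / t) by (field; lra).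
  enough (c * ((t - tau + w * tau) / t) / (w * p) <= 1 - d) by lra.
  apply Rle_div_l; [nra |].
  replace (c * ((t - tau + w * tau) / t)) with (c * (t - tau + w * tau) / t)
    by (field; lra).
  apply (Rle_div_l _ _ t Ht); lra.
Qed.

Lemma Gamma_ge_d_c_arg_of_payoff_bound (Gamma : R -> R) (t tau p d w : R) :
  0 < t -> 0 < tau < t -> 0 < d < 1 -> 0 < w < 1 ->
  PiC_c Gamma t tau p d w >= Gamma d * tau ->
  Gamma d >= d_c_arg t tau p w.
Proof.
  intros Ht Htau Hd Hw H.
  assert (Hden : 0 < 1 - (1 - d) * w) by nra.
  apply Rge_le, (Rle_div_r _ _ _ Hden) in H.
  assert (Hkey : p * t <= Gamma d * (t - tau + w * tau)) by nra.
  unfold d_c_arg.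
  replace (1 - (1 - w) * (tau / t)) with ((t - tau + w * tau) / t) by (field; lra).
  apply Rle_ge, Rle_div_l; [apply Rdiv_lt_0_compat; nra |].
  replace (Gamma d * ((t - tau + w * tau) / t))
    with (Gamma d * (t - tau + w * tau) / t) by (field; lra).
  apply (Rle_div_r p _ t Ht); exact Hkey.
Qed.

Lemma Gamma_inv_ge (Gamma : R -> R) (y x : R) :
  0 <= x <= 1 -> Gamma x >= y -> exists s, is_Gamma_inv Gamma y s /\ x <= s.
Proof.
  intros Hx Hy.
  assert (Hlevel : Gamma_level_set Gamma y x) by (split; assumption).
  destruct (completeness (Gamma_level_set Gamma y)) as [s Hs].
  - exists 1; intros z [Hz _]; lra.
  - exists x; exact Hlevel.
  - exists s; split; [exact Hs | exact (proj1 Hs x Hlevel)].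
Qed.

(* Monotonicity, continuity and positivity of Gamma, and Gamma 0 > p, only make
   Gamma^{-1} a genuine inverse; the bounds themselves do not need them. *)
Theorem corollary1 (Gamma : R -> R) (t tau c p d w : R) :
  0 < t -> 0 < tau -> tau < t -> 0 < c -> c < p ->
  0 < d -> d < 1 -> 0 < w -> w < 1 ->
  strictly_decreasing_01 Gamma -> continuous_on_01 Gamma -> positive_on_01 Gamma ->
  Gamma 0 > p ->
  cooperation_conditions Gamma t tau c p d w ->
  d <= d_s t tau c p w /\
  (exists s, is_Gamma_inv Gamma (d_c_arg t tau p w) s /\ d <= s).
Proof.
  intros Ht Htau Htt Hc Hcp Hd0 Hd1 Hw0 Hw1 _ _ _ _ [Hcoop_s Hcoop_c].
  split.
  - apply d_le_d_s_of_payoff_bound; try lra.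
    apply coop_s_ge_perpetual_defection; [lra | lra | exact Hcoop_s].
  - apply Gamma_inv_ge; [lra |].
    apply Gamma_ge_d_c_arg_of_payoff_bound; try lra.
    apply coop_c_ge_perpetual_defection; [lra | lra | exact Hcoop_c].
Qed.
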